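(* Let $R$ be a $*$-ring, let $a\in R$, and let $n\geq 2$ be an integer. Then $a$ is core invertible if and only if there exists $b\in {}^{\circ}a$ such that $u=a^{n}+b^{*}b$ is invertible. In this case $$a^{\mathrm{core}}=a^{n-1}u^{-1}.$$
   Context: A $*$-ring is an associative ring with identity $1$ and an involution $*$, i.e. $(a^* )^*=a$, $(ab)^*=b^*a^*$ and $(a+b)^*=a^*+b^*$. For $a\in R$, ${}^{\circ}a=\{x\in R : xa=0\}$. An element $a$ is core invertible if there is $x\in R$ with $(ax)^*=ax$, $ax^2=x$ and $xa^2=a$. Such an $x$ is unique and denoted $a^{\mathrm{core}}$. ''Invertible'' means having a two-sided inverse in $R$. *)

From HB Require Import structures.
From mathcomp Require Import all_boot all_order all_algebra.
Set Implicit Arguments. Unset Strict Implicit. Unset Printing Implicit Defensive.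
Import GRing.Theory.
Local Open Scope ring_scope.

Definition is_involution (R : pzRingType) (star : R -> R) : Prop :=
  [/\ forall a, star (star a) = a,
      forall a b, star (a * b) = star b * star a &
      forall a b, star (a + b) = star a + star b].

Definition is_inverse (R : pzRingType) (u v : R) : Prop := u * v = 1 /\ v * u = 1.

Definition invertible (R : pzRingType) (u : R) : Prop := exists v, is_inverse u v.

Definition is_core_inverse (R : pzRingType) (star : R -> R) (a x : R) : Prop :=
  [/\ star (a * x) = a * x, a * x ^+ 2 = x & x * a ^+ 2 = a].

Definition core_invertible (R : pzRingType) (star : R -> R) (a : R) : Prop :=
  exists x, is_core_inverse star a x.

Definition lann (R : pzRingType) (a : R) : R -> Prop := fun x => x * a = 0.

From mathcomp Require Import all_boot all_order all_algebra.
Import GRing.Theory.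
Local Open Scope ring_scope.

(* If [x] is the core inverse of [a], then [p = 1 - a x] is a hermitian
   idempotent killing [a] on the left, and [a^n + p^* p] has the inverse
   [x^n + (1 - x a) p].  Conversely, if [b a = 0] and [w] inverts
   [u = a^n + b^* b], then [a^* = a^* u w = a^* a (a^(n-1) w)], which makes
   [a (a^(n-1) w)] a hermitian projection with [a (a^(n-1) w) a = a]; the
   left inverse [w] yields [w a^(n-1) a^2 = a], and together these give the
   remaining core-inverse identities for [a^(n-1) w].  Uniqueness of the
   core inverse then identifies every core inverse with [a^(n-1) u^-1]. *)

Section StarRing.
Context {R : pzRingType} {star : R -> R}.
Hypothesis Hstar : is_involution star.

Lemma starK x : star (star x) = x. Proof. by case: Hstar. Qed.
Lemma starM x y : star (x * y) = star y * star x. Proof. by case: Hstar. Qed.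
Lemma starD x y : star (x + y) = star x + star y. Proof. by case: Hstar. Qed.

Lemma star0 : star 0 = 0.
Proof. by apply: (addrI (star 0)); rewrite -starD !addr0. Qed.

Lemma starN x : star (- x) = - star x.
Proof. by apply: (addrI (star x)); rewrite -starD !subrr star0. Qed.

Lemma star1 : star 1 = 1.
Proof. by have := starM (star 1) 1; rewrite mulr1 !starK mulr1. Qed.

Lemma hermitian_inner_of_star_factor {a s : R} : star a = star a * a * s ->
  star (a * s) = a * s /\ a * s * a = a.
Proof.
move=> sa; have as_herm : star (a * s) = a * s.
  have e : star (a * s) = star s * star a * a * s by rewrite starM {1}sa !mulrA.
  by rewrite -[a * s]starK e !starM !starK !mulrA -e.
split=> //; rewrite -as_herm starM.
by rewrite -{3}[a]starK [star a in RHS]sa !starM starK mulrA.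
Qed.

Section CoreInverse.
Context {a x : R}.
Hypothesis hx : is_core_inverse star a x.

Lemma core_inner : a * x * a = a.
Proof.
case: hx => _ ax2 xa2.
by rewrite -{2}xa2 mulrA -(mulrA a) -expr2 ax2 xa2.
Qed.

Lemma core_outer : x * a * x = x.
Proof.
case: hx => _ ax2 xa2.
by rewrite -{2}ax2 mulrA -(mulrA x) -expr2 xa2 ax2.
Qed.

Lemma core_exprMl k : a ^+ k.+1 * x ^+ k.+1 = a * x.
Proof.
case: hx => _ ax2 _; elim: k => [|k IH]; first by rewrite !expr1.
have -> : x ^+ k.+2 = x ^+ 2 * x ^+ k by rewrite -exprD.
by rewrite exprSr -mulrA (mulrA a) ax2 -exprS.
Qed.

Lemma core_exprMr k : x ^+ k.+1 * a ^+ k.+1 = x * a.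
Proof.
case: hx => _ _ xa2; elim: k => [|k IH]; first by rewrite !expr1.
have -> : a ^+ k.+2 = a ^+ 2 * a ^+ k by rewrite -exprD.
by rewrite exprSr -mulrA (mulrA x) xa2 -exprS.
Qed.

Lemma core_complement_lann : (1 - a * x) * a = 0.
Proof. by rewrite mulrBl mul1r core_inner subrr. Qed.

Lemma core_perturbation_inverse k :
  is_inverse (a ^+ k.+1 + star (1 - a * x) * (1 - a * x))
             (x ^+ k.+1 + (1 - x * a) * (1 - a * x)).
Proof.
have [sx ax2 xa2] := hx.
rewrite starD starN star1 sx; set p := 1 - a * x; set q := 1 - x * a.
have pa : p * a = 0 := core_complement_lann.
have px : p * x = 0 by rewrite mulrBl mul1r -mulrA -expr2 ax2 subrr.
have xp : x * p = 0 by rewrite mulrBr mulr1 mulrA core_outer subrr.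
have aq : a * q = 0 by rewrite mulrBr mulr1 mulrA core_inner subrr.
have qa : q * a = 0 by rewrite mulrBl mul1r -mulrA -expr2 xa2 subrr.
have pp : p * p = p by rewrite {2}/p mulrBr mulr1 mulrA pa mul0r subr0.
have pq : p * q = p by rewrite /q mulrBr mulr1 mulrA px mul0r subr0.
have qp : q * p = q by rewrite /p mulrBr mulr1 mulrA qa mul0r subr0.
have aqp : a ^+ k.+1 * (q * p) = 0 by rewrite exprSr -!mulrA (mulrA a) aq mul0r mulr0.
have pxk : p * x ^+ k.+1 = 0 by rewrite exprS mulrA px mul0r.
have xpk : x ^+ k.+1 * p = 0 by rewrite exprSr -mulrA xp mulr0.
have qpa : q * p * a ^+ k.+1 = 0 by rewrite -mulrA exprS (mulrA p) pa mul0r mulr0.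
rewrite pp; split.
  rewrite mulrDl (mulrDr (a ^+ k.+1)) (mulrDr p).
  by rewrite core_exprMl aqp pxk mulrA pq pp addr0 add0r addrC subrK.
rewrite mulrDl (mulrDr (x ^+ k.+1)) (mulrDr (q * p)).
by rewrite core_exprMr xpk qpa -mulrA pp qp addr0 add0r addrC subrK.
Qed.
End CoreInverse.

Lemma core_inverse_unique {a x z : R} :
  is_core_inverse star a x -> is_core_inverse star a z -> x = z.
Proof.
move=> hx hz; have [sx ax2 _] := hx; have [sz _ za2] := hz.
have ax_az : a * x = a * z.
  rewrite -{1}(core_inner hz) -mulrA -{1}sz -sx -starM mulrA (core_inner hx).
  exact: sz.
have za_xa : z * a = x * a.
  have a_eq : a = a ^+ 2 * (x ^+ 2 * a).
    by rewrite -{1}(core_inner hx) -{1}ax2 !expr2 !mulrA.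
  by rewrite {1}a_eq mulrA za2 mulrA ax2.
by rewrite -(core_outer hx) -za_xa -mulrA ax_az mulrA (core_outer hz).
Qed.

Lemma core_inverse_of_factor a w k :
  star a = star a * a * (a ^+ k.+1 * w) -> w * a ^+ k.+1 * a ^+ 2 = a ->
  is_core_inverse star a (a ^+ k.+1 * w).
Proof.
move=> sa ya2; have [ax_herm axa] := hermitian_inner_of_star_factor sa.
set x := a ^+ k.+1 * w in ax_herm axa *; set y := w * a ^+ k.+1 in ya2.
have ya_pow : y * a ^+ k.+2 = a ^+ k.+1.
  have -> : a ^+ k.+2 = a ^+ 2 * a ^+ k by rewrite -exprD.
  by rewrite mulrA ya2 -exprS.
have x_yax : x = y * a * x by rewrite /x -{1}ya_pow (exprS a k.+1) !mulrA.
have xa_ya : x * a = y * a.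
  by rewrite {1}x_yax -(mulrA (y * a)) -(mulrA y) (mulrA a x) axa.
split=> //.
  have x_aR : x = a * (a ^+ k * w) by rewrite /x exprS mulrA.
  by rewrite expr2 mulrA {2}x_aR mulrA axa -x_aR.
by rewrite expr2 mulrA xa_ya -mulrA -expr2.
Qed.

Section Perturbation.
Context {a b w : R} {k : nat}.
Hypothesis ba : b * a = 0.

Lemma star_factor_of_rinverse : (a ^+ k.+2 + star b * b) * w = 1 ->
  star a = star a * a * (a ^+ k.+1 * w).
Proof.
move=> uw; have sab : star a * star b = 0 by rewrite -starM ba star0.
rewrite -{1}[star a]mulr1 -uw mulrA mulrDr mulrA sab mul0r addr0.
by rewrite exprS !mulrA.
Qed.

Lemma pow_factor_of_linverse : w * (a ^+ k.+2 + star b * b) = 1 ->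
  w * a ^+ k.+1 * a ^+ 2 = a.
Proof.
move=> wu; have : w * (a ^+ k.+2 + star b * b) * a = a by rewrite wu mul1r.
rewrite -mulrA mulrDl -(mulrA (star b)) ba mulr0 addr0 => e.
by rewrite -[RHS]e -mulrA -exprD addn2 exprSr.
Qed.

Lemma core_inverse_of_perturbation : is_inverse (a ^+ k.+2 + star b * b) w ->
  is_core_inverse star a (a ^+ k.+1 * w).
Proof.
case=> uw wu; apply: core_inverse_of_factor.
  exact: star_factor_of_rinverse.
exact: pow_factor_of_linverse.
Qed.
End Perturbation.
End StarRing.

Theorem corollary2p9 (R : pzRingType) (star : R -> R) (Hstar : is_involution star)
    (a : R) (n : nat) (hn : (2 <= n)%N) :
  (core_invertible star a <->
     exists b, lann a b /\ invertible (a ^+ n + star b * b))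
  /\
  (forall b uinv x, lann a b -> is_inverse (a ^+ n + star b * b) uinv ->
     is_core_inverse star a x -> x = a ^+ n.-1 * uinv).
Proof.
case: n hn => [|[|k]] // _ /=; split; first split.
- case=> x hx; exists (1 - a * x); split; first exact: core_complement_lann hx.
  exists (x ^+ k.+2 + (1 - x * a) * (1 - a * x)).
  exact (core_perturbation_inverse Hstar hx k.+1).
- case=> b [ba [w uw]]; exists (a ^+ k.+1 * w).
  exact (core_inverse_of_perturbation Hstar ba uw).
move=> b w x ba uw hx.
exact (core_inverse_unique Hstar hx (core_inverse_of_perturbation Hstar ba uw)).
Qed.
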